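(* Assume the setting described in the context. If $E$ is a closed unbounded subset of $\lambda$, then there are stationarily many $\delta\in S$ for which $E\cap C_\delta\notin I_\delta$.
   Context: Setting: $\mu$ is a singular cardinal with $\mathrm{cf}(\mu)=\aleph_0$, $\lambda=\mu^+$, $\sigma$ is regular with $\aleph_0<\sigma<\mu$, $S$ is a stationary subset of $\{\delta<\lambda:\mathrm{cf}(\delta)=\sigma\}$, and $\langle\mu_i:i<\omega\rangle$ is a strictly increasing sequence of regular cardinals cofinal in $\mu$ with $\sigma<\mu_0$. For $\delta\in S$, $c^0_\delta$ is the increasing enumeration of a club subset of $\delta$ of order type $\sigma$, and for every club $E\subseteq\lambda$ the set of $\delta\in S$ with $\mathrm{ran}(c^0_\delta)\subseteq E$ is stationary. $I(\delta,\epsilon,m)=(c^0_\delta(\omega\cdot\epsilon+m),c^0_\delta(\omega\cdot\epsilon+m+1)]$ for $\epsilon<\sigma$, $m<\omega$. $\langle C_\delta:\delta\in S\rangle$ satisfies: $C_\delta$ club in $\delta$; $\mathrm{ran}(c^0_\delta)\subseteq C_\delta$; $|C_\delta\cap I(\delta,\epsilon,m)|\leq\mu_m^+$; every $\alpha\in\mathrm{nacc}(C_\delta)\cap I(\delta,\epsilon,m)$ has $\mathrm{cf}(\alpha)>\mu_m^+$; for every club $E\subseteq\lambda$ there are stationarily many $\delta\in S$ with $E\cap\mathrm{nacc}(C_\delta)\cap I(\delta,\epsilon,m)\neq\emptyset$ for all $\epsilon<\sigma$, $m<\omega$. ($\mathrm{acc}(C)=\{\alpha<\delta:\alpha=\sup(\alpha\cap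 C)\}$, $\mathrm{nacc}(C)=C\setminus\mathrm{acc}(C)$.) For $\delta\in S$, $I_\delta$ is the ideal on $C_\delta$ generated by the sets $\{\gamma\in C_\delta:\gamma\in\mathrm{acc}(C_\delta)\text{ or }\mathrm{cf}(\gamma)<\alpha\text{ or }\gamma<\beta\}$ for $\alpha<\mu$, $\beta<\delta$. *)

Set Implicit Arguments.
(* Ordinals below lambda = mu^+ are modelled by an abstract
   type T with a strict well-order lt. *)
From Stdlib Require Import List.

Section OrdinalNotions.
Variables (T : Type) (lt : T -> T -> Prop).

Definition le (x y : T) : Prop := lt x y \/ x = y.

Definition well_order : Prop :=
  (forall x, ~ lt x x) /\
  (forall x y z, lt x y -> lt y z -> lt x z) /\
  (forall x y, lt x y \/ x = y \/ lt y x) /\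
  well_founded lt.

Definition seg (a : T) : T -> Prop := fun x => lt x a.

Definition inj_into (A B : T -> Prop) : Prop :=
  exists f : T -> T, (forall x, A x -> B (f x)) /\
                     (forall x y, A x -> A y -> f x = f y -> x = y).

Definition is_cardinal (k : T) : Prop :=
  forall b, lt b k -> ~ inj_into (seg k) (seg b).

Definition cof_le (g k : T) : Prop :=
  exists f : T -> T, (forall x, lt x k -> lt (f x) g) /\
                     (forall y, lt y g -> exists x, lt x k /\ le y (f x)).

Definition cf_is (g k : T) : Prop :=
  cof_le g k /\ forall k', lt k' k -> ~ cof_le g k'.

Definition regular_cardinal (k : T) : Prop := is_cardinal k /\ cf_is k k.

Definition succ_cardinal (nu k : T) : Prop :=
  is_cardinal k /\ lt nu k /\
  forall k', is_cardinal k' -> lt nu k' -> le k k'.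

Definition uncountable (A : T -> Prop) : Prop :=
  ~ exists f : T -> nat, forall x y, A x -> A y -> f x = f y -> x = y.

Definition is_limit (x : T) : Prop :=
  (exists y, lt y x) /\ forall y, lt y x -> exists z, lt y z /\ lt z x.

(* the whole of T (= lambda) has order type mu^+ *)
Definition is_succ_of_card (mu : T) : Prop :=
  is_cardinal mu /\ (forall a, inj_into (seg a) (seg mu)) /\
  ~ inj_into (fun _ => True) (seg mu).

Definition club (E : T -> Prop) : Prop :=
  (forall a, exists b, E b /\ le a b) /\
  (forall g, is_limit g ->
     (forall a, lt a g -> exists b, E b /\ lt a b /\ lt b g) -> E g).

Definition stationary (S : T -> Prop) : Prop :=
  forall E, club E -> exists x, S x /\ E x.

Definition club_in (d : T) (C : T -> Prop) : Prop :=
  (forall x, C x -> lt x d) /\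
  (forall a, lt a d -> exists b, C b /\ le a b) /\
  (forall g, lt g d -> is_limit g ->
     (forall a, lt a g -> exists b, C b /\ lt a b /\ lt b g) -> C g).

Definition acc (d : T) (C : T -> Prop) (a : T) : Prop :=
  lt a d /\ forall x, lt x a -> exists b, C b /\ lt x b /\ lt b a.

Definition nacc (d : T) (C : T -> Prop) (a : T) : Prop :=
  C a /\ ~ acc d C a.

Variables (sigma : T) (c0 : T -> T -> nat -> T).
(* c0 d e m  stands for  c^0_d(omega*e + m)  (e < sigma) *)

Definition ran_c0 (d x : T) : Prop :=
  exists e m, lt e sigma /\ x = c0 d e m.

Definition Iint (d e : T) (m : nat) (x : T) : Prop :=
  lt (c0 d e m) x /\ le x (c0 d e (S m)).

Variables (mu : T) (C : T -> T -> Prop).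

Definition ideal_gen (d a b x : T) : Prop :=
  C d x /\ (acc d (C d) x \/ (exists k, cf_is x k /\ lt k a) \/ lt x b).

(* X belongs to the ideal on C_d generated by the sets ideal_gen d a b,
   a < mu, b < d *)
Definition in_ideal (d : T) (X : T -> Prop) : Prop :=
  (forall x, X x -> C d x) /\
  exists l : list (T * T),
    Forall (fun p => lt (fst p) mu /\ lt (snd p) d) l /\
    forall x, X x -> Exists (fun p => ideal_gen d (fst p) (snd p) x) l.

End OrdinalNotions.

(* Choose delta in S such that every interval I(delta, eps, m) contains a
   non-accumulation point of C_delta lying in E.  A set in the ideal I_delta is
   covered by finitely many generators, given by parameters alpha_i < mu and
   beta_i < delta; pick eps and m so large that every beta_i lies below
   I(delta, eps, m) and every alpha_i lies below mu_m.  The chosen point x of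
   E in I(delta, eps, m) is then above every beta_i, is not an accumulation
   point of C_delta, and has cofinality above mu_m^+ > alpha_i, so no generator
   contains it. *)
From Stdlib Require Import List Classical Lia PeanoNat.

Set Implicit Arguments.
Unset Strict Implicit.

Lemma Forall_directed_bound (A I : Type) (good : I -> Prop) (R : I -> I -> Prop)
    (Q : I -> A -> Prop) (i0 : I) :
  good i0 ->
  (forall i j, good i -> good j -> exists k, good k /\ R i k /\ R j k) ->
  (forall i j a, good i -> good j -> R i j -> Q i a -> Q j a) ->
  forall l, Forall (fun a => exists i, good i /\ Q i a) l ->
  exists i, good i /\ Forall (Q i) l.
Proof.
  intros Hi0 Hdir Hmono l Hl; induction Hl as [|a l [i [Hi Ha]] _ [j [Hj Hl]]].
  - exists i0; auto.
  - destruct (Hdir i j Hi Hj) as [k [Hk [Hik Hjk]]].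
    exists k; split; [exact Hk|]; constructor.
    + exact (Hmono i k a Hi Hk Hik Ha).
    + refine (Forall_impl _ _ Hl); intros b; exact (Hmono j k b Hj Hk Hjk).
Qed.

Section WellOrder.
Variables (T : Type) (lt : T -> T -> Prop) (Hwo : well_order lt).

Lemma lt_irrefl x : ~ lt x x.
Proof. destruct Hwo as [H _]; apply H. Qed.

Lemma lt_trans x y z : lt x y -> lt y z -> lt x z.
Proof. destruct Hwo as [_ [H _]]; apply H. Qed.

Lemma lt_total x y : lt x y \/ x = y \/ lt y x.
Proof. destruct Hwo as [_ [_ [H _]]]; apply H. Qed.

Lemma le_lt_trans x y z : le lt x y -> lt y z -> lt x z.
Proof. intros [H | ->] H'; [exact (lt_trans H H') | exact H']. Qed.

Lemma lt_le_trans x y z : lt x y -> le lt y z -> lt x z.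
Proof. intros H [H' | <-]; [exact (lt_trans H H') | exact H]. Qed.

Lemma exists_max x y : exists z, (z = x \/ z = y) /\ le lt x z /\ le lt y z.
Proof.
  destruct (lt_total x y) as [H | [-> | H]].
  - exists y; unfold le; auto.
  - exists y; unfold le; auto.
  - exists x; unfold le; auto.
Qed.

Lemma increasing_seq_mono (f : nat -> T) :
  (forall i j, i < j -> lt (f i) (f j)) -> forall i j, i <= j -> le lt (f i) (f j).
Proof.
  intros Hinc i j Hij; destruct (Nat.eq_dec i j) as [<- | Hne]; [right; reflexivity|].
  left; apply Hinc; lia.
Qed.

Lemma cf_is_unique g k k' : cf_is lt g k -> cf_is lt g k' -> k = k'.
Proof.
  intros [Hk Hmin] [Hk' Hmin'].
  destruct (lt_total k k') as [H | [H | H]]; [| exact H |].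
  - destruct (Hmin' k H Hk).
  - destruct (Hmin k' H Hk').
Qed.

Lemma uncountable_inhabited (A : T -> Prop) : uncountable A -> exists x, A x.
Proof.
  intros Hunc; apply NNPP; intros Hempty; apply Hunc.
  exists (fun _ => 0); intros x y Hx; destruct (Hempty (ex_intro _ x Hx)).
Qed.

Lemma not_ideal_gen (C : T -> T -> Prop) d a b x k :
  nacc lt d (C d) x -> lt b x -> cf_is lt x k -> lt a k -> ~ ideal_gen lt C d a b x.
Proof.
  intros [_ Hnacc] Hbx Hk Hak [_ [Hacc | [[k' [Hk' Hk'a]] | Hxb]]].
  - exact (Hnacc Hacc).
  - rewrite <- (cf_is_unique Hk Hk') in Hk'a; exact (lt_irrefl (lt_trans Hak Hk'a)).
  - exact (lt_irrefl (lt_trans Hbx Hxb)).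
Qed.

Section Enumeration.
Variables (sigma d : T) (c0 : T -> T -> nat -> T).
Hypothesis Hc0_inc : forall e e' m m', lt e sigma -> lt e' sigma ->
  (lt e e' \/ (e = e' /\ m < m')) -> lt (c0 d e m) (c0 d e' m').

Lemma c0_mono e e' m m' : lt e sigma -> lt e' sigma -> le lt e e' -> m <= m' ->
  le lt (c0 d e m) (c0 d e' m').
Proof.
  intros He He' [Hlt | <-] Hm.
  - left; apply Hc0_inc; auto.
  - destruct (Nat.eq_dec m m') as [<- | Hne]; [right; reflexivity|].
    left; apply Hc0_inc; auto; right; split; [reflexivity | lia].
Qed.

Lemma c0_cofinal b : club_in lt d (ran_c0 lt sigma c0 d) -> lt b d ->
  exists e m, lt e sigma /\ lt b (c0 d e m).
Proof.
  intros [_ [Hcof _]] Hb.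
  destruct (Hcof b Hb) as [y [[e [m [He ->]]] Hby]].
  exists e, (S m); split; [exact He|].
  apply (le_lt_trans Hby), Hc0_inc; auto.
Qed.

Lemma c0_bound_finite (mus : nat -> T) (mu : T) (l : list (T * T)) :
  (exists e, lt e sigma) ->
  club_in lt d (ran_c0 lt sigma c0 d) ->
  (forall i j, i < j -> lt (mus i) (mus j)) ->
  (forall a, lt a mu -> exists i, lt a (mus i)) ->
  Forall (fun p => lt (fst p) mu /\ lt (snd p) d) l ->
  exists e m, lt e sigma /\
    Forall (fun p => lt (snd p) (c0 d e m) /\ lt (fst p) (mus m)) l.
Proof.
  intros [e0 He0] Hclub Hmus_inc Hmus_cof Hl.
  pose proof (increasing_seq_mono Hmus_inc) as Hmus_mono.
  destruct (@Forall_directed_bound (T * T) (T * nat) (fun i => lt (fst i) sigma)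
              (fun i j => le lt (fst i) (fst j) /\ snd i <= snd j)
              (fun i p => lt (snd p) (c0 d (fst i) (snd i)) /\ lt (fst p) (mus (snd i)))
              (e0, 0) He0) with (l := l)
    as [[e m] [He Hbound]]; [| | | exists e, m; auto].
  - intros [e m] [e' m'] He He'; simpl in *.
    destruct (exists_max e e') as [e'' [He'' [H1 H2]]].
    exists (e'', Nat.max m m'); simpl; repeat split; auto; try lia.
    destruct He'' as [-> | ->]; assumption.
  - intros [e m] [e' m'] [a b] He He' [Hee Hmm] [Hb Ha]; simpl in *; split.
    + exact (lt_le_trans Hb (c0_mono He He' Hee Hmm)).
    + exact (lt_le_trans Ha (Hmus_mono _ _ Hmm)).
  - refine (Forall_impl _ _ Hl); intros [a b] [Ha Hb]; simpl.
    destruct (c0_cofinal Hclub Hb) as [e [m [He Hbe]]].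
    destruct (Hmus_cof a Ha) as [i Hi].
    exists (e, m + i); simpl; split; [exact He|split].
    + apply (lt_le_trans Hbe), c0_mono; unfold le; auto; lia.
    + apply (lt_le_trans Hi), Hmus_mono; lia.
Qed.

End Enumeration.
End WellOrder.

Theorem proposition5p3
  (T : Type) (lt : T -> T -> Prop) (Hwo : well_order lt)
  (mu sigma : T) (mus mups : nat -> T)
  (Stat : T -> Prop) (c0 : T -> T -> nat -> T) (C : T -> T -> Prop)
  (Hlam : is_succ_of_card lt mu)
  (Hmus_lt : forall i, lt (mus i) mu)
  (Hmus_inc : forall i j, i < j -> lt (mus i) (mus j))
  (Hmus_reg : forall i, regular_cardinal lt (mus i))
  (Hmus_cof : forall a, lt a mu -> exists i, lt a (mus i))
  (Hmups : forall i, succ_cardinal lt (mus i) (mups i))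
  (Hsig_reg : regular_cardinal lt sigma)
  (Hsig_unc : uncountable (seg lt sigma))
  (Hsig_mu0 : lt sigma (mus 0))
  (HS_cf : forall d, Stat d -> cf_is lt d sigma)
  (HS_stat : stationary lt Stat)
  (Hc0_lt : forall d e m, Stat d -> lt e sigma -> lt (c0 d e m) d)
  (Hc0_inc : forall d e e' m m', Stat d -> lt e sigma -> lt e' sigma ->
               (lt e e' \/ (e = e' /\ m < m')) -> lt (c0 d e m) (c0 d e' m'))
  (Hc0_club : forall d, Stat d -> club_in lt d (ran_c0 lt sigma c0 d))
  (Hc0_guess : forall E, club lt E ->
      stationary lt (fun d => Stat d /\ forall x, ran_c0 lt sigma c0 d x -> E x))
  (HC_club : forall d, Stat d -> club_in lt d (C d))
  (HC_c0 : forall d x, Stat d -> ran_c0 lt sigma c0 d x -> C d x)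
  (HC_card : forall d e m, Stat d -> lt e sigma ->
      inj_into (fun x => C d x /\ Iint lt c0 d e m x) (seg lt (mups m)))
  (HC_cf : forall d e m x, Stat d -> lt e sigma ->
      nacc lt d (C d) x -> Iint lt c0 d e m x ->
      exists k, cf_is lt x k /\ lt (mups m) k)
  (HC_guess : forall E, club lt E ->
      stationary lt (fun d => Stat d /\ forall e m, lt e sigma ->
         exists x, E x /\ nacc lt d (C d) x /\ Iint lt c0 d e m x))
  (E : T -> Prop) (HE : club lt E) :
  stationary lt (fun d => Stat d /\ ~ in_ideal lt mu C d (fun x => E x /\ C d x)).
Proof.
  intros D HD.
  destruct (HC_guess E HE D HD) as [d [[Sd Hguess] Dd]].
  exists d; split; [split; [exact Sd|] | exact Dd].
  intros [_ [l [Hl Hcover]]].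
  destruct (c0_bound_finite Hwo (fun e e' m m' => Hc0_inc d e e' m m' Sd) (uncountable_inhabited Hsig_unc)
              (Hc0_club d Sd) Hmus_inc Hmus_cof Hl) as [e [m [He Hbound]]].
  destruct (Hguess e m He) as [x [Ex [Nx Ix]]].
  destruct (HC_cf d e m x Sd He Nx Ix) as [k [Hk Hmk]].
  destruct (Hmups m) as [_ [Hmus_mups _]].
  pose proof (Hcover x (conj Ex (proj1 Nx))) as Hgen.
  apply Exists_exists in Hgen as [[a b] [Hin Hgen]].
  apply Forall_forall with (x := (a, b)) in Hbound as [Hb Ha]; [simpl in *|exact Hin].
  apply (not_ideal_gen Hwo Nx (lt_trans Hwo Hb (proj1 Ix)) Hk
           (lt_trans Hwo Ha (lt_trans Hwo Hmus_mups Hmk)) Hgen).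
Qed.
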